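(* For every integer $d\ge3$, the family of sets $(\mathsf U_{d,s})_{s\ge1}$ is not increasing with respect to inclusion: there exist integers $1\le s<t$ such that $\mathsf U_{d,s}\not\subseteq\mathsf U_{d,t}$.
   Context: For $U\in\mathcal U(ds)$ (unitary $ds\times ds$ matrices) viewed as a $d\times d$ block matrix with blocks $U_{ij}\in M_s(\mathbb C)$, $\phi_{d,s}(U)=\big(\tfrac1s\|U_{ij}\|_F^2\big)_{i,j=1}^d$ with $\|X\|_F=\operatorname{Tr}(XX^* )^{1/2}$, and $\mathsf U_{d,s}:=\phi_{d,s}(\mathcal U(ds))$. *)

From HB Require Import structures.
From mathcomp Require Import all_boot all_order all_algebra.
From mathcomp Require Import reals.
From mathcomp.real_closed Require Import complex.
Set Implicit Arguments. Unset Strict Implicit. Unset Printing Implicit Defensive.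
Import Order.TTheory GRing.Theory Num.Theory.
Local Open Scope ring_scope.

(* Complex numbers C := R[i] over an arbitrary realType R
   (any realType is isomorphic to the classical reals). *)

Section Defs.
Variable R : realType.
Local Notation C := (R[i])%type.

Definition adj_mx m n (A : 'M[C]_(m, n)) : 'M[C]_(n, m) :=
  \matrix_(i, j) (A j i)^*.

Definition unitary_mx n (U : 'M[C]_n) : Prop :=
  U *m adj_mx U = 1%:M /\ adj_mx U *m U = 1%:M.

Lemma block_idx_proof d s (i : 'I_d) (k : 'I_s) : (i * s + k < d * s)%N.
Proof.
have := ltn_ord i; have := ltn_ord k => hk hi.
apply: (@leq_trans (i * s + s)); first by rewrite ltn_add2l.
by rewrite -mulSnr leq_mul2r hi orbT.
Qed.

(* row/column index (i-1)s + k of the ds x ds matrix *)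
Definition block_idx d s (i : 'I_d) (k : 'I_s) : 'I_(d * s) :=
  Ordinal (block_idx_proof i k).

Definition block_of d s (U : 'M[C]_(d * s)) (i j : 'I_d) : 'M[C]_s :=
  \matrix_(k, l) U (block_idx i k) (block_idx j l).

Definition frob2 s (X : 'M[C]_s) : C := \tr (X *m adj_mx X).

Definition phi_ds d s (U : 'M[C]_(d * s)) : 'M[C]_d :=
  \matrix_(i, j) ((s%:R)^-1 * frob2 (block_of U i j)).

Definition Uset d s : 'M[C]_d -> Prop :=
  fun M => exists U : 'M[C]_(d * s), unitary_mx U /\ phi_ds U = M.

End Defs.

From HB Require Import structures.
From mathcomp Require Import all_boot all_order all_algebra fingroup perm.
From mathcomp Require Import reals.
From mathcomp.real_closed Require Import complex.
Set Implicit Arguments. Unset Strict Implicit. Unset Printing Implicit Defensive.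
Import Order.TTheory GRing.Theory Num.Theory.
Local Open Scope ring_scope.

(* The matrix avg_cycle3_mx, equal to (J_3 - I_3)/2 on the first three
   coordinates and to the identity elsewhere, is the average of the
   permutation matrices of the 3-cycle c = (0 1 2) and of c^-1. Hence it is
   phi_{d,2} of the permutation matrix that applies c in the first coordinate
   of each block and c^-1 in the second, so it lies in U_{d,2}.
   It does not lie in U_{d,s} for odd s: if phi U is that matrix, block row 2
   of U is [A B 0 ... 0], and block columns 0 and 1 of U are orthogonal while
   their other blocks have disjoint supports, so A^* B = 0. Then A A^* is
   idempotent, so its trace ||A||_F^2 = s/2 is an integer. *)

Section BlockIndex.
Variables d s : nat.

Lemma block_size_gt0 (c : 'I_(d * s)) : (0 < s)%N.
Proof. by case: s c => [|//] [c]; rewrite muln0. Qed.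

Lemma block_row_proof (c : 'I_(d * s)) : (c %/ s < d)%N.
Proof. by rewrite ltn_divLR ?block_size_gt0. Qed.

Lemma block_col_proof (c : 'I_(d * s)) : (c %% s < s)%N.
Proof. by rewrite ltn_mod block_size_gt0. Qed.

Definition block_row (c : 'I_(d * s)) : 'I_d := Ordinal (block_row_proof c).
Definition block_col (c : 'I_(d * s)) : 'I_s := Ordinal (block_col_proof c).

Lemma block_idx_row_col (c : 'I_(d * s)) : block_idx (block_row c) (block_col c) = c.
Proof. by apply: val_inj; rewrite /= -divn_eq. Qed.

Lemma block_row_idx (i : 'I_d) (k : 'I_s) : block_row (block_idx i k) = i.
Proof.
by apply: val_inj; rewrite /= divnMDl ?divn_small ?addn0 ?(leq_ltn_trans _ (ltn_ord k)).
Qed.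

Lemma block_col_idx (i : 'I_d) (k : 'I_s) : block_col (block_idx i k) = k.
Proof. by apply: val_inj; rewrite /= modnMDl modn_small. Qed.

Lemma eq_block_idx (i j : 'I_d) (k l : 'I_s) :
  (block_idx i k == block_idx j l) = (i == j) && (k == l).
Proof.
apply/eqP/andP => [e|[/eqP -> /eqP ->]] //.
have := congr1 block_row e; have := congr1 block_col e.
by rewrite !block_row_idx !block_col_idx => -> ->.
Qed.

Lemma sum_block_idx (V : nmodType) (F : 'I_(d * s) -> V) :
  \sum_c F c = \sum_(i < d) \sum_(k < s) F (block_idx i k).
Proof.
rewrite pair_big /= (reindex (fun p : 'I_d * 'I_s => block_idx p.1 p.2)) //.
exists (fun c => (block_row c, block_col c)) => [[i k] _ | c _] /=.
  by rewrite block_row_idx block_col_idx.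
exact: block_idx_row_col.
Qed.

End BlockIndex.

Lemma mxtrace_pid (F : fieldType) n r :
  (r <= n)%N -> \tr (pid_mx r : 'M[F]_n) = r%:R.
Proof.
move=> le_rn; rewrite /mxtrace.
transitivity (\sum_(i < n | (i < r)%N) (1 : F)).
  by rewrite [RHS]big_mkcond; apply: eq_bigr => i _; rewrite !mxE eqxx; case: (i < r)%N.
by rewrite -(big_ord_widen _ (fun=> 1)) // sumr_const card_ord.
Qed.

Lemma mxtrace_idem (F : fieldType) n (P : 'M[F]_n) :
  P *m P = P -> \tr P = (\rank P)%:R.
Proof.
move=> idemP; set r := \rank P.
have ebaseP : col_ebase P *m pid_mx r *m row_ebase P = P := mulmx_ebase P.
set L := col_ebase P in ebaseP; set W := row_ebase P in ebaseP.
have [unitL unitW] : L \in unitmx /\ W \in unitmx.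
  by split; [exact: col_ebase_unit | exact: row_ebase_unit].
have pidWL : pid_mx r *m (W *m L) *m pid_mx r = pid_mx r :> 'M_n.
  apply: (can_inj (mulKmx unitL)); apply: (can_inj (mulmxK unitW)).
  by rewrite /= ebaseP -[RHS]idemP -ebaseP !mulmxA.
have le_rn : (r <= n)%N := rank_leq_row P.
rewrite -ebaseP mxtrace_mulC mulmxA mxtrace_mulC -(@pid_mx_id F n n n r le_rn).
by rewrite -mulmxA mxtrace_mulC pidWL mxtrace_pid.
Qed.

Section Blocks.
Variable R : realType.
Local Notation C := (R[i])%type.

Lemma block_of_mul d s (A B : 'M[C]_(d * s)) (i j : 'I_d) :
  block_of (A *m B) i j = \sum_k block_of A i k *m block_of B k j.
Proof.
apply/matrixP => k l; rewrite !mxE summxE sum_block_idx.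
by apply: eq_bigr => m _; rewrite mxE; apply: eq_bigr => n _; rewrite !mxE.
Qed.

Lemma block_of_adj d s (A : 'M[C]_(d * s)) (i j : 'I_d) :
  block_of (adj_mx A) i j = adj_mx (block_of A j i).
Proof. by apply/matrixP => k l; rewrite !mxE. Qed.

Lemma block_of1 d s (i j : 'I_d) :
  block_of (1%:M : 'M[C]_(d * s)) i j = if i == j then 1%:M else 0.
Proof.
apply/matrixP => k l; rewrite !mxE eq_block_idx.
by case: (i == j); rewrite !mxE.
Qed.

Lemma unitary_block_rows d s (U : 'M[C]_(d * s)) (i i' : 'I_d) : unitary_mx U ->
  \sum_j block_of U i j *m adj_mx (block_of U i' j) = if i == i' then 1%:M else 0.
Proof.
case=> UU' _; rewrite -block_of1 -UU' block_of_mul.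
by apply: eq_bigr => j _; rewrite block_of_adj.
Qed.

Lemma unitary_block_cols d s (U : 'M[C]_(d * s)) (j j' : 'I_d) : unitary_mx U ->
  \sum_i adj_mx (block_of U i j) *m block_of U i j' = if j == j' then 1%:M else 0.
Proof.
case=> _ U'U; rewrite -block_of1 -U'U block_of_mul.
by apply: eq_bigr => i _; rewrite block_of_adj.
Qed.

Lemma adj_mx0 m n : adj_mx (0 : 'M[C]_(m, n)) = 0.
Proof. by apply/matrixP => i j; rewrite !mxE conjC0. Qed.

Lemma frob2E s (X : 'M[C]_s) : frob2 X = \sum_k \sum_l X k l * (X k l)^*.
Proof.
by apply: eq_bigr => k _; rewrite mxE; apply: eq_bigr => l _; rewrite !mxE.
Qed.

Lemma frob2_eq0 s (X : 'M[C]_s) : frob2 X = 0 -> X = 0.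
Proof.
have sq_ge0 (z : C) : 0 <= z * z^* by exact: mul_conjC_ge0.
rewrite frob2E => /psumr_eq0P rows0; apply/matrixP => k l; rewrite mxE.
have /psumr_eq0P entries0 := rows0 (fun k _ => sumr_ge0 _ (fun l _ => sq_ge0 _)) k isT.
by apply/eqP; rewrite -mul_conjC_eq0 entries0.
Qed.

Lemma frob2_rank s (A B : 'M[C]_s) :
  A *m adj_mx A + B *m adj_mx B = 1%:M -> adj_mx A *m B = 0 ->
  frob2 A = (\rank (A *m adj_mx A))%:R.
Proof.
move=> rowsAB orthAB; apply: mxtrace_idem.
rewrite -[RHS]mulmx1 -rowsAB mulmxDr.
by rewrite -!mulmxA (mulmxA (adj_mx A) B) orthAB mul0mx !mulmx0 addr0.
Qed.

Lemma phi_ds_entry_nat d s (U : 'M[C]_(d * s)) (i0 j0 j1 : 'I_d) :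
  (0 < s)%N -> unitary_mx U -> j0 != j1 ->
  (forall j, j != j0 -> j != j1 -> phi_ds U i0 j = 0) ->
  (forall i, i != i0 -> phi_ds U i j0 = 0 \/ phi_ds U i j1 = 0) ->
  exists n : nat, s%:R * phi_ds U i0 j0 = n%:R.
Proof.
move=> s_gt0 unitU j01 row0 cols0.
have s_neq0 : s%:R != 0 :> C by rewrite pnatr_eq0 -lt0n.
have block0 i j : phi_ds U i j = 0 -> block_of U i j = 0.
  by rewrite mxE => /eqP; rewrite mulf_eq0 invr_eq0 (negPf s_neq0) => /eqP/frob2_eq0.
set A := block_of U i0 j0; set B := block_of U i0 j1.
have rowsAB : A *m adj_mx A + B *m adj_mx B = 1%:M.
  have := unitary_block_rows i0 i0 unitU; rewrite eqxx (bigD1 j0) // (bigD1 j1) /=.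
    by rewrite big1 ?addr0 // => j /andP[nj0 nj1]; rewrite block0 ?row0 // mul0mx.
  by rewrite eq_sym.
have orthAB : adj_mx A *m B = 0.
  have := unitary_block_cols j0 j1 unitU; rewrite (negPf j01) (bigD1 i0) //=.
  by rewrite big1 ?addr0 // => i /cols0[] /block0 ->; rewrite ?adj_mx0 ?mul0mx ?mulmx0.
exists (\rank (A *m adj_mx A)).
by rewrite -(frob2_rank rowsAB orthAB) mxE mulrA mulfV ?mul1r.
Qed.

End Blocks.

Section BlockPermutation.
Variable R : realType.
Local Notation C := (R[i])%type.

Lemma perm_mx_unitary n (p : 'S_n) : unitary_mx (perm_mx p : 'M[C]_n).
Proof.
have adjP : adj_mx (perm_mx p : 'M[C]_n) = perm_mx p^-1.
  by rewrite -tr_perm_mx; apply/matrixP => i j; rewrite !mxE conjC_nat.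
by rewrite /unitary_mx adjP -!perm_mxM mulgV mulVg perm_mx1.
Qed.

Variables (d s : nat) (rho : 'I_s -> {perm 'I_d}).

Definition block_perm_fun (c : 'I_(d * s)) : 'I_(d * s) :=
  block_idx (rho (block_col c) (block_row c)) (block_col c).

Lemma block_perm_fun_inj : injective block_perm_fun.
Proof.
move=> c c' /eqP; rewrite eq_block_idx => /andP[/eqP e /eqP ecol].
rewrite ecol in e.
by rewrite -[c]block_idx_row_col -[c']block_idx_row_col (perm_inj e) ecol.
Qed.

Definition block_perm : {perm 'I_(d * s)} := perm block_perm_fun_inj.

Lemma block_permE (i : 'I_d) (k : 'I_s) :
  block_perm (block_idx i k) = block_idx (rho k i) k.
Proof. by rewrite permE /block_perm_fun block_row_idx block_col_idx. Qed.

Lemma phi_ds_block_perm (i j : 'I_d) :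
  phi_ds (perm_mx block_perm : 'M[C]_(d * s)) i j =
  s%:R^-1 * \sum_k (rho k i == j)%:R.
Proof.
rewrite mxE frob2E; congr (_ * _); apply: eq_bigr => k _.
rewrite (bigD1 k) //= big1 => [|l nlk]; rewrite !mxE block_permE eq_block_idx.
  by rewrite eqxx andbT conjC_nat -natrM mulnb andbb addr0.
by rewrite [k == l]eq_sym (negPf nlk) andbF mul0r.
Qed.

End BlockPermutation.

Definition cycle3 (n : nat) : nat :=
  match n with 0 => 1 | 1 => 2 | 2 => 0 | _ => n end%N.

Lemma cycle3_inj : injective cycle3.
Proof. by apply: (can_inj (g := cycle3 \o cycle3)); case=> [|[|[|n]]]. Qed.

Section Cycle3.
Variables (R : realType) (d : nat).
Hypothesis d_ge3 : (3 <= d)%N.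
Local Notation C := (R[i])%type.

Lemma cycle3_lt (i : 'I_d) : (cycle3 i < d)%N.
Proof. by case: i => [[|[|[|n]]] ?] //=; apply: leq_trans d_ge3. Qed.

Definition cycle3_ord (i : 'I_d) : 'I_d := Ordinal (cycle3_lt i).

Lemma cycle3_ord_inj : injective cycle3_ord.
Proof. by move=> i j /(congr1 val) /cycle3_inj /val_inj. Qed.

Definition cycle3_perm : {perm 'I_d} := perm cycle3_ord_inj.

Definition cycle3_and_inv (k : 'I_2) : {perm 'I_d} :=
  if k == 0%N :> nat then cycle3_perm else (cycle3_perm^-1)%g.

Definition avg_cycle3_mx : 'M[C]_d :=
  \matrix_(i, j) if ((i < 3) && (j < 3))%N then (i != j)%:R / 2 else (i == j)%:R.

Lemma phi_ds_cycle3 :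
  phi_ds (perm_mx (block_perm cycle3_and_inv) : 'M[C]_(d * 2)) = avg_cycle3_mx.
Proof.
apply/matrixP => i j.
rewrite phi_ds_block_perm big_ord_recr big_ord1 /cycle3_and_inv /= mxE.
rewrite -[(cycle3_perm^-1)%g i == j](inj_eq (@perm_inj _ cycle3_perm)) permKV.
rewrite !permE -!val_eqE /= mulrC.
have two_neq0 : 2 != 0 :> C by rewrite pnatr_eq0.
case: i j => [[|[|[|m]]] ?] [[|[|[|n]]] ?] //=; rewrite ?addr0 ?add0r ?mul0r //.
by set b := (_ == _)%:R; rewrite -mulr2n -[b *+ 2]mulr_natr mulfK.
Qed.

Lemma avg_cycle3_notin_Uset s : odd s -> ~ Uset s avg_cycle3_mx.
Proof.
move=> odd_s [U [unitU phiU]].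
pose i0 : 'I_d := Ordinal d_ge3.
pose j0 : 'I_d := Ordinal (@leq_trans 3 1 d isT d_ge3).
pose j1 : 'I_d := Ordinal (@leq_trans 3 2 d isT d_ge3).
have row0 j : j != j0 -> j != j1 -> phi_ds U i0 j = 0.
  by rewrite phiU mxE -!val_eqE; case: j => [[|[|[|n]]] ?] //=; rewrite mul0r.
have cols0 i : i != i0 -> phi_ds U i j0 = 0 \/ phi_ds U i j1 = 0.
  rewrite phiU !mxE -val_eqE.
  by case: i => [[|[|[|n]]] ?] //= _; [left | right | left]; rewrite ?mul0r.
have j01 : j0 != j1 by [].
have [n] := phi_ds_entry_nat (odd_gt0 odd_s) unitU j01 row0 cols0.
rewrite phiU mxE /= mul1r => half_s.
have : s%:R = (n * 2)%:R :> C by rewrite natrM -half_s mulfVK // pnatr_eq0.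
by move/eqP; rewrite eqr_nat => /eqP s_eq; rewrite s_eq oddM andbF in odd_s.
Qed.

End Cycle3.

Theorem corollary3p14 (R : realType) (d : nat) (hd : (3 <= d)%N) :
  exists s t : nat, [/\ (1 <= s)%N, (s < t)%N &
    ~ (forall M : 'M[R[i]]_d, Uset s M -> Uset t M)].
Proof.
exists 2%N, 3%N; split => // incl.
apply: (avg_cycle3_notin_Uset hd (isT : odd 3)); apply: incl.
exists (perm_mx (block_perm (cycle3_and_inv hd))); split.
  exact: perm_mx_unitary.
exact: phi_ds_cycle3.
Qed.
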